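(* Let $P$ be a finite nonempty set of nonempty linear strings over a finite alphabet $\Sigma$. Let $w_o$ be a shortest linear superstring of $P$, and let $c_o$ be a shortest circular superstring of $P\cup\overline P$. Then $2|w_o|=|c_o|$.
   Context: Let $\overline\Sigma=\{\overline a: a\in\Sigma\}$ be a disjoint copy of $\Sigma$. For $w=a_1\dots a_k$, set $\overline w=\overline{a_1}\dots\overline{a_k}$, and let $\overline P=\{\overline w: w\in P\}$. A linear superstring of a set of strings is a linear string containing each of them as a substring. A circular string $\langle a_1\dots a_n\rangle$ has length $n$, and its substrings are the finite substrings of $(a_1\dots a_n)^\infty$. A circular superstring is a circular string containing each string of the set as a substring. *)

From mathcomp Require Import all_boot.
Set Implicit Arguments. Unset Strict Implicit. Unset Printing Implicit Defensive.

(* Linear strings over an alphabet T are sequences [seq T]; "substring"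
   means contiguous factor, i.e. seq's [infix]. *)

Definition lin_superstring (T : eqType) (P : seq (seq T)) (w : seq T) : Prop :=
  forall p, p \in P -> infix p w.

(* The circular string <c> (of length size c >= 1) contains s as a substring:
   s is a finite factor of c^infinity, i.e. a factor of c^m for some m. *)
Definition circ_substring (T : eqType) (s c : seq T) : Prop :=
  0 < size c /\ exists m : nat, infix s (flatten (nseq m c)).

Definition circ_superstring (T : eqType) (P : seq (seq T)) (c : seq T) : Prop :=
  0 < size c /\ forall p, p \in P -> circ_substring p c.

Definition shortest_lin_superstring (T : eqType) (P : seq (seq T)) (w : seq T) :=
  lin_superstring P w /\ forall w', lin_superstring P w' -> size w <= size w'.

Definition shortest_circ_superstring (T : eqType) (P : seq (seq T)) (c : seq T) :=
  circ_superstring P c /\ forall c', circ_superstring P c' -> size c <= size c'.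

(* The barred copy: alphabet Sigma + Sigma, with a |-> inl a and
   \overline a |-> inr a. *)
Definition P_and_bar (S : finType) (P : seq (seq S)) : seq (seq (S + S)%type) :=
  [seq map inl p | p <- P] ++ [seq map inr p | p <- P].

From mathcomp Require Import all_boot.

Set Implicit Arguments.
Unset Strict Implicit.
Unset Printing Implicit Defensive.

(* A circular superstring c of P and its barred copy contains both barred
   and unbarred letters.  Cut c open at a barred letter: no occurrence of an
   unbarred pattern in a power of c crosses the cut, so erasing the barred
   letters leaves a linear superstring of P, and symmetrically for the
   barred copy.  Hence |c| >= 2 |w_o|; conversely the circular string
   <w_o \overline{w_o}> has length 2 |w_o|. *)

Section Cut.
Variable T : eqType.
Implicit Types (s u v w : seq T) (y : T).

Lemma prefix_cut w v s y : y \notin s -> prefix s (w ++ y :: v) -> prefix s w.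
Proof.
elim: w s => [|a w IH] [|z s] //=; rewrite in_cons negb_or.
  by case/andP=> /negPf yz _ /andP[/eqP zy _]; rewrite zy eqxx in yz.
by case/andP=> _ ys /andP[-> /(IH _ ys)].
Qed.

Lemma infix_cut u v s y :
  y \notin s -> infix s (u ++ y :: v) -> infix s u || infix s v.
Proof.
move=> ys; elim: u => [|a u IH]; rewrite ?cat0s ?cat_cons infix_consl.
  case/orP=> [/(prefix_cut (w := [::]) ys)|->]; last by rewrite orbT.
  by rewrite prefixs0 => /eqP->.
case/orP=> [/(prefix_cut (w := a :: u) ys)/prefixW->//|/IH/orP[su|->]].
  by rewrite infix_consl su orbT.
by rewrite orbT.
Qed.

Lemma infix_nseq_cut u v y s m :
  y \notin s -> infix s (flatten (nseq m (u ++ y :: v))) -> infix s (v ++ u).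
Proof.
move=> ys.
have from_v k : infix s (v ++ flatten (nseq k (u ++ y :: v))) -> infix s (v ++ u).
  elim: k => [|k IH] /=; first by rewrite cats0 => /infix_trans; apply; exact: prefix_infix.
  by rewrite -catA catA => /(infix_cut ys)/orP[//|/IH].
case: m => [|m] /=; first by move=> /eqP->; exact: infix0s.
rewrite -catA cat_cons => /(infix_cut ys)/orP[su|/from_v//].
exact: infix_catl.
Qed.

Lemma mem_circ_substring s c : circ_substring s c -> {subset s <= c}.
Proof.
case=> _ [m /mem_infix sc] x /sc; elim: m {sc} => [|m IH] //=.
by rewrite mem_cat => /orP[|/IH].
Qed.

Lemma infix_circ_substring s c : 0 < size c -> infix s c -> circ_substring s c.
Proof. by move=> c0 sc; split=> //; exists 1; rewrite /= cats0. Qed.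

End Cut.

Lemma infix_map (A B : eqType) (f : A -> B) s t :
  infix s t -> infix (map f s) (map f t).
Proof.
by case/infixP=> [a [b ->]]; apply/infixP; exists (map f a), (map f b); rewrite !map_cat.
Qed.

Section Projection.
Variables (A B : eqType) (f : A -> option B) (g : B -> A).
Hypothesis gK : pcancel g f.

Lemma infix_pmap p t : infix (map g p) t -> infix p (pmap f t).
Proof.
case/infixP=> [a [b ->]]; apply/infixP; exists (pmap f a), (pmap f b).
by rewrite !pmap_cat (map_pK gK).
Qed.

Lemma lin_superstring_pmap_cut (P : seq (seq B)) u y v :
  f y = None -> (forall p, p \in P -> circ_substring (map g p) (u ++ y :: v)) ->
  lin_superstring P (pmap f (v ++ u)).
Proof.
move=> fy Pc p /Pc[_ [m pc]]; apply: infix_pmap.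
have yp : y \notin map g p by apply/mapP=> [[b _ yb]]; rewrite yb gK in fy.
exact: infix_nseq_cut yp pc.
Qed.

Lemma shortest_lin_superstring_le_pmap (P : seq (seq B)) w c y :
  shortest_lin_superstring P w -> y \in c -> f y = None ->
  (forall p, p \in P -> circ_substring (map g p) c) ->
  size w <= size (pmap f c).
Proof.
case=> _ wmin /splitPr[u v] fy /(lin_superstring_pmap_cut fy)/wmin.
by rewrite !size_pmap !count_cat /= fy addnC.
Qed.

End Projection.

Definition getl (S : Type) (x : S + S) : option S := if x is inl a then Some a else None.
Definition getr (S : Type) (x : S + S) : option S := if x is inr a then Some a else None.

Lemma inlK (S : Type) : pcancel inl (@getl S). Proof. by []. Qed.
Lemma inrK (S : Type) : pcancel inr (@getr S). Proof. by []. Qed.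

Lemma size_pmap_getl_getr (S : Type) (c : seq (S + S)) :
  size (pmap (@getl S) c) + size (pmap (@getr S) c) = size c.
Proof. by elim: c => [|[a|a] c IH] //=; rewrite ?addSn ?addnS IH. Qed.

Lemma circ_superstring_bar (S : finType) (P : seq (seq S)) w :
  lin_superstring P w -> 0 < size w ->
  circ_superstring (P_and_bar P) (map inl w ++ map inr w).
Proof.
move=> Pw w0; have c0 : 0 < size (map inl w ++ map inr w).
  by rewrite size_cat size_map ltn_addr.
split=> // q; rewrite mem_cat => /orP[] /mapP[p /Pw pw ->];
  apply: infix_circ_substring c0 _.
- exact/infix_catr/infix_map.
- exact/infix_catl/infix_map.
Qed.

Theorem lemma5 (S : finType) (P : seq (seq S)) (w_o : seq S) (c_o : seq (S + S)%type) :
  P != [::] ->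
  (forall p, p \in P -> p != [::]) ->
  shortest_lin_superstring P w_o ->
  shortest_circ_superstring (P_and_bar P) c_o ->
  2 * size w_o = size c_o.
Proof.
move=> P0 Pne wo [[_ csup] cmin].
have [p0 p0P] : exists p0, p0 \in P by case: (P) P0 => // p0 P' _; exists p0; exact: mem_head.
have [a p0a] : exists a, a \in p0 by case: (p0) (Pne p0 p0P) => // a p' _; exists a; exact: mem_head.
have cl p : p \in P -> circ_substring (map inl p) c_o.
  by move=> pP; apply: csup; rewrite mem_cat map_f.
have cr p : p \in P -> circ_substring (map inr p) c_o.
  by move=> pP; apply: csup; rewrite mem_cat map_f ?orbT.
have inr_c : inr a \in c_o := mem_circ_substring (cr _ p0P) (map_f _ p0a).
have inl_c : inl a \in c_o := mem_circ_substring (cl _ p0P) (map_f _ p0a).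
have le_l := shortest_lin_superstring_le_pmap (@inlK S) wo inr_c erefl cl.
have le_r := shortest_lin_superstring_le_pmap (@inrK S) wo inl_c erefl cr.
have w0 : 0 < size w_o.
  by apply: leq_trans (size_infix (wo.1 _ p0P)); rewrite lt0n size_eq0 Pne.
have := cmin _ (circ_superstring_bar wo.1 w0).
rewrite size_cat !size_map mul2n -addnn => ge_c.
by apply/eqP; rewrite eqn_leq ge_c -(size_pmap_getl_getr c_o) leq_add.
Qed.
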